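(* Let $\mathcal{A}$ be a small category, and let $\Lambda$ be a class of dinatural transformations between functors $\mathcal{A}^{op}\times\mathcal{A}\to\mathbf{Set}$ such that: (i) for every $\alpha:P\Rightarrow Q$ in $\Lambda$ and every functor $R:\mathcal{A}^{op}\times\mathcal{A}\to\mathbf{Set}$, the dinatural transformation $\gamma_\alpha$ from $(x',x)\mapsto\mathbf{Set}(Q(x,x'),R(x',x))$ to $(x',x)\mapsto\mathbf{Set}(P(x,x'),R(x',x))$ with components $\gamma_{\alpha,x}(g)=g\circ\alpha_x$ belongs to $\Lambda$; (ii) for every $\gamma:S\Rightarrow T$ in $\Lambda$, the family $\varepsilon_S;\gamma$, with components $\int_{y\in\mathcal{A}}S(y,y)\to T(x,x)$, $s\mapsto\gamma_x(s_x)$, is a dinatural transformation from the constant functor at $\int_{y}S(y,y)$ to $T$. Then for every $\alpha:P\Rightarrow Q$ in $\Lambda$ and every (not necessarily in $\Lambda$) dinatural transformation $\beta:Q\Rightarrow R$, the family $\beta_x\circ\alpha_x:P(x,x)\to R(x,x)$ is a dinatural transformation $P\Rightarrow R$.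
   Context: For $F,G:\mathcal{A}^{op}\times\mathcal{A}\to\mathbf{Set}$, a dinatural transformation is a family $\alpha_x:F(x,x)\to G(x,x)$ such that for every $f:a\to b$: $G(f,\mathrm{id}_b)\circ\alpha_b\circ F(\mathrm{id}_b,f)=G(\mathrm{id}_a,f)\circ\alpha_a\circ F(f,\mathrm{id}_a)$. For $S:\mathcal{A}^{op}\times\mathcal{A}\to\mathbf{Set}$, the end $\int_yS(y,y)$ is the set of families $(s_y\in S(y,y))_y$ with $S(\mathrm{id}_a,f)(s_a)=S(f,\mathrm{id}_b)(s_b)$ for all $f:a\to b$; the projections $\varepsilon_S:s\mapsto s_x$ form a dinatural transformation from the constant functor at $\int_yS(y,y)$ to $S$. *)

From Stdlib Require Import FunctionalExtensionality.

Set Implicit Arguments.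

Record Category := {
  Obj : Type;
  Hom : Obj -> Obj -> Type;
  cid : forall a, Hom a a;
  comp : forall a b c, Hom b c -> Hom a b -> Hom a c;
  comp_id_l : forall a b (f : Hom a b), comp (cid b) f = f;
  comp_id_r : forall a b (f : Hom a b), comp f (cid a) = f;
  comp_assoc : forall a b c d (h : Hom c d) (g : Hom b c) (f : Hom a b),
      comp h (comp g f) = comp (comp h g) f
}.
Arguments cid {C} a : rename.
Arguments comp {C a b c} _ _ : rename.

(** A functor A^op x A -> Set.  [fmap F f g : F a b -> F a' b'] for
    [f : a' -> a] (contravariant slot) and [g : b -> b'] (covariant slot). *)
Unset Implicit Arguments.
Record Functor (C : Category) := {
  fobj :> Obj C -> Obj C -> Type;
  fmap : forall a a' b b', Hom C a' a -> Hom C b b' -> fobj a b -> fobj a' b';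
  fmap_id : forall a b (x : fobj a b), fmap a a b b (cid a) (cid b) x = x;
  fmap_comp : forall a a' a'' b b' b''
      (f1 : Hom C a' a) (f2 : Hom C a'' a') (g1 : Hom C b b') (g2 : Hom C b' b'')
      (x : fobj a b),
      fmap a a'' b b'' (comp f1 f2) (comp g2 g1) x
      = fmap a' a'' b' b'' f2 g2 (fmap a a' b b' f1 g1 x)
}.
Set Implicit Arguments.
Arguments fmap {C} F {a a' b b'} _ _ _ : rename.

Definition dinatural (C : Category) (F G : Functor C)
    (alpha : forall x, F x x -> G x x) : Prop :=
  forall a b (f : Hom C a b) (x : F b a),
    fmap G f (cid b) (alpha b (fmap F (cid b) f x))
    = fmap G (cid a) f (alpha a (fmap F f (cid a) x)).

Definition constF (C : Category) (X : Type) : Functor C.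
Proof.
  refine {| fobj := fun _ _ => X;
            fmap := fun _ _ _ _ _ _ x => x |}; reflexivity.
Defined.

Definition End_ (C : Category) (S : Functor C) : Type :=
  { s : forall y, S y y |
    forall a b (f : Hom C a b), fmap S (cid a) f (s a) = fmap S f (cid b) (s b) }.

Definition homF (C : Category) (Q R : Functor C) : Functor C.
Proof.
  refine {| fobj := fun x' x => Q x x' -> R x' x;
            fmap := fun a a' b b' (f : Hom C a' a) (g : Hom C b b') h =>
                      fun q => fmap R f g (h (fmap Q g f q)) |}.
  - intros a b h; apply functional_extensionality; intro q.
    rewrite fmap_id, fmap_id; reflexivity.
  - intros a a' a'' b b' b'' f1 f2 g1 g2 h.
    apply functional_extensionality; intro q.
    rewrite (fmap_comp _ Q _ _ _ _ _ _ g2 g1 f2 f1), fmap_comp; reflexivity.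
Defined.

Definition gamma_of (C : Category) (P Q R : Functor C)
    (alpha : forall x, P x x -> Q x x) :
    forall x, homF Q R x x -> homF P R x x :=
  fun x g p => g (alpha x p).

Definition eps_then (C : Category) (S T : Functor C)
    (gamma : forall x, S x x -> T x x) :
    forall x, constF C (End_ S) x x -> T x x :=
  fun x s => gamma x (proj1_sig s x).

Arguments dinatural {C F G} alpha.
Arguments gamma_of {C P Q} R alpha _ _ _.
Arguments eps_then {C S T} gamma _ _.

(* A dinatural transformation beta : Q => R is the same thing as a point of the
   end of (x', x) |-> Set(Q(x, x'), R(x', x)).  Feeding this point to the
   dinatural family eps ; gamma_alpha and evaluating at an element of P yields
   exactly the dinaturality square of beta o alpha. *)
From Stdlib Require Import FunctionalExtensionality.

Set Implicit Arguments.

Section DinaturalAsEnd.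

Variable A : Category.
Variables P Q R : Functor A.

Lemma dinatural_homF_wedge (beta : forall x, Q x x -> R x x) :
  dinatural beta ->
  forall a b (f : Hom A a b),
    fmap (homF Q R) (cid a) f (beta a) = fmap (homF Q R) f (cid b) (beta b).
Proof.
  intros Hbeta a b f.
  apply functional_extensionality; intro q; simpl.
  symmetry; apply Hbeta.
Qed.

Definition end_of_dinatural (beta : forall x, Q x x -> R x x)
    (Hbeta : dinatural beta) : End_ (homF Q R) :=
  exist _ beta (dinatural_homF_wedge Hbeta).

Lemma dinatural_eps_then_apply
    (gamma : forall x, homF Q R x x -> homF P R x x)
    (beta : forall x, Q x x -> R x x) :
  dinatural (eps_then gamma) -> dinatural beta ->
  dinatural (fun x (p : P x x) => gamma x (beta x) p).
Proof.
  intros Hgamma Hbeta a b f p.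
  exact (f_equal (fun h => h p)
           (Hgamma a b f (end_of_dinatural Hbeta))).
Qed.

End DinaturalAsEnd.

Theorem mainTheorem16 (A : Category)
  (Lambda : forall F G : Functor A, (forall x, F x x -> G x x) -> Prop)
  (HLdin : forall (F G : Functor A) (alpha : forall x, F x x -> G x x),
      Lambda F G alpha -> dinatural alpha)
  (Hi : forall (P Q : Functor A) (alpha : forall x, P x x -> Q x x) (R : Functor A),
      Lambda P Q alpha -> Lambda (homF Q R) (homF P R) (gamma_of R alpha))
  (Hii : forall (S T : Functor A) (gamma : forall x, S x x -> T x x),
      Lambda S T gamma -> dinatural (eps_then gamma)) :
  forall (P Q R : Functor A) (alpha : forall x, P x x -> Q x x)
         (beta : forall x, Q x x -> R x x),
    Lambda P Q alpha -> dinatural beta ->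
    dinatural (fun x (p : P x x) => beta x (alpha x p)).
Proof.
  intros P Q R alpha beta Halpha Hbeta.
  exact (dinatural_eps_then_apply (Hii _ _ _ (Hi _ _ _ R Halpha)) Hbeta).
Qed.
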